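(* Let $p,q$ be positive integers, let $e\in\mathbb{R}^p$ be the vector of all ones, and let $$L:=\{(x,u)\in\mathbb{R}^p\times\mathbb{R}^q:x\ge\|u\|e\},\qquad M:=\{(x,u)\in\mathbb{R}^p\times\mathbb{R}^q:\langle x,e\rangle\ge\|u\|,\ x\ge0\}.$$ Let $(z,w)\in\mathbb{R}^p\times\mathbb{R}^q$. Then: 1. If $z^+\ge\|w\|e$, then $P_L(z,w)=(z^+,w)$ and $P_M(-z,-w)=(z^-,0)$. 2. If $\langle z^-,e\rangle\ge\|w\|$, then $P_L(z,w)=(z^+,0)$ and $P_M(-z,-w)=(z^-,-w)$. 3. If $z^+\not\ge\|w\|e$ and $\langle z^-,e\rangle<\|w\|$, then the piecewise linear equation $$\lambda\|w\|=\left\langle e,[(\lambda+1)z-\|w\|e]^-\right\rangle$$ has a unique positive solution $\lambda>0$, and for this $\lambda$, $$P_L(z,w)=\left(\Big[z-\tfrac{1}{\lambda+1}\|w\|e\Big]^++\tfrac{1}{\lambda+1}\|w\|e,\ \tfrac{1}{\lambda+1}w\right),\qquad P_M(-z,-w)=\left(\Big[z-\tfrac{1}{\lambda+1}\|w\|e\Big]^-,\ -\tfrac{\lambda}{\lambda+1}w\right).$$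
   Context: For a closed convex set $C$, $P_C(x):=\operatorname{argmin}\{\|x-y\|:y\in C\}$ is the metric (orthogonal) projection onto $C$, with respect to the Euclidean norm on $\mathbb{R}^p\times\mathbb{R}^q\cong\mathbb{R}^{p+q}$ (inner product $\langle(x,u),(y,v)\rangle=\langle x,y\rangle+\langle u,v\rangle$). The order $\ge$ on vectors is componentwise; $z^+\not\ge\|w\|e$ means that $z^+\ge\|w\|e$ fails. For $\alpha\in\mathbb{R}$, $\alpha^+:=\max(\alpha,0)$, $\alpha^-:=\max(-\alpha,0)$, applied componentwise to vectors. $L$ and $M$ are mutually dual proper cones (the extended second order cones). *)

From HB Require Import structures.
From mathcomp Require Import all_boot all_order all_algebra.
From mathcomp Require Import reals.
Set Implicit Arguments. Unset Strict Implicit.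
 Unset Printing Implicit Defensive.
Import Order.TTheory GRing.Theory Num.Theory.
Local Open Scope ring_scope.

Section Defs.
Variable R : realType.

Definition vdot n (x y : 'I_n -> R) : R := \sum_(i < n) x i * y i.
Definition vnorm n (x : 'I_n -> R) : R := Num.sqrt (vdot x x).
Definition ones (n : nat) : 'I_n -> R := fun _ => 1.
Arguments ones : clear implicits.
Definition vpos n (x : 'I_n -> R) : 'I_n -> R := fun i => Num.max (x i) 0.
Definition vneg n (x : 'I_n -> R) : 'I_n -> R := fun i => Num.max (- x i) 0.
Definition vge n (x y : 'I_n -> R) : Prop := forall i, y i <= x i.

Definition pnorm p q (x : 'I_p -> R) (u : 'I_q -> R) : R :=
  Num.sqrt (vdot x x + vdot u u).
Definition pdist p q (a b : ('I_p -> R) * ('I_q -> R)) : R :=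
  pnorm (fun i => a.1 i - b.1 i) (fun j => a.2 j - b.2 j).

Definition is_proj p q (C : ('I_p -> R) * ('I_q -> R) -> Prop)
  (a y : ('I_p -> R) * ('I_q -> R)) : Prop :=
  C y /\ forall y', C y' -> pdist a y <= pdist a y'.

Definition coneL p q (xu : ('I_p -> R) * ('I_q -> R)) : Prop :=
  vge xu.1 (fun i => vnorm xu.2 * ones p i).
Definition coneM p q (xu : ('I_p -> R) * ('I_q -> R)) : Prop :=
  vnorm xu.2 <= vdot xu.1 (ones p) /\ vge xu.1 (fun _ => 0).
End Defs.
Arguments ones : clear implicits.

From mathcomp Require Import all_boot all_order all_algebra.
From mathcomp Require Import reals boolp topology normedtype.
From mathcomp Require Import ring lra.
Import Order.TTheory GRing.Theory Num.Theory numFieldNormedType.Exports.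
Set Implicit Arguments.
Unset Strict Implicit.
Local Open Scope ring_scope.

(** Moreau's decomposition: since L and M are mutually dual, whenever
    (z, w) = y - m with y in L, m in M and <y, m> = 0, the point y is the
    projection of (z, w) onto L and m that of -(z, w) onto M.  In case 3 they depend on t = 1/(lam+1),
    a root of the continuous, strictly increasing function
    t |-> <e, (t |w| e - z)^+> - (1 - t)|w|, which is negative at 0 because
    <z^-, e> < |w| and positive at 1 because some z_i < |w|. *)

Section PositiveParts.
Variable R : realDomainType.
Implicit Types a : R.

Lemma maxr0_ge0 a : 0 <= Num.max a 0.
Proof. by rewrite le_max lexx orbT. Qed.

Lemma maxr0_subN a : Num.max a 0 - Num.max (- a) 0 = a.
Proof.
case: (leP a 0) => ha; first by rewrite max_l ?oppr_ge0 // sub0r opprK.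
by rewrite max_r ?subr0 // oppr_le0 ltW.
Qed.

Lemma maxr0_Nmul a : Num.max (- a) 0 * Num.max a 0 = 0.
Proof.
case: (leP a 0) => ha; first by rewrite mulr0.
by rewrite max_r ?mul0r // oppr_le0 ltW.
Qed.

End PositiveParts.

Section Vectors.
Variables (R : realType) (n : nat).
Implicit Types x y : 'I_n -> R.

Lemma vdotC x y : vdot x y = vdot y x.
Proof. by apply: eq_bigr => i _; rewrite mulrC. Qed.

Lemma vdot_onesr x : vdot x (ones R n) = \sum_(i < n) x i.
Proof. by apply: eq_bigr => i _; rewrite mulr1. Qed.

Lemma vdot_ge0 x : 0 <= vdot x x.
Proof. by apply: sumr_ge0 => i _; rewrite -expr2 sqr_ge0. Qed.

Lemma vnorm_ge0 x : 0 <= vnorm x.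
Proof. exact: sqrtr_ge0. Qed.

Lemma vnorm_sqr x : vnorm x ^+ 2 = vdot x x.
Proof. by rewrite sqr_sqrtr // vdot_ge0. Qed.

Lemma vnormN x : vnorm (fun j => - x j) = vnorm x.
Proof. by congr Num.sqrt; apply: eq_bigr => i _; rewrite mulrNN. Qed.

Lemma vnorm0 : vnorm (fun _ : 'I_n => 0 : R) = 0.
Proof. by rewrite /vnorm /vdot big1 ?sqrtr0 // => i _; rewrite mulr0. Qed.

Lemma lagrange_identity x y :
  \sum_(i < n) \sum_(j < n) (x i * y j - x j * y i) ^+ 2
  = 2 * (vdot x x * vdot y y - vdot x y ^+ 2).
Proof.
pose A i j := x i * x i * (y j * y j).
pose B i j := x i * y i * (x j * y j).
have -> : vdot x x * vdot y y = \sum_i \sum_j A i j by rewrite big_distrlr.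
have -> : vdot x y ^+ 2 = \sum_i \sum_j B i j by rewrite expr2 big_distrlr.
have AC : \sum_(i < n) \sum_(j < n) A j i = \sum_i \sum_j A i j.
  exact: exchange_big.
transitivity (\sum_i \sum_j A i j + \sum_i \sum_j A j i - 2 * \sum_i \sum_j B i j).
  rewrite mulr_sumr -big_split -sumrB; apply: eq_bigr => i _.
  rewrite mulr_sumr -big_split -sumrB; apply: eq_bigr => j _.
  by rewrite /A /B /=; ring.
by rewrite AC; ring.
Qed.

Lemma normr_vdot_le x y : `|vdot x y| <= vnorm x * vnorm y.
Proof.
have : 0 <= \sum_(i < n) \sum_(j < n) (x i * y j - x j * y i) ^+ 2.
  by do 2![apply: sumr_ge0 => ? _]; exact: sqr_ge0.
rewrite lagrange_identity pmulr_rge0 // subr_ge0 => lag.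
by rewrite /vnorm -sqrtrM ?vdot_ge0 // -sqrtr_sqr ler_wsqrtr.
Qed.

Lemma vdot_ge_Nnorm x y : - (vnorm x * vnorm y) <= vdot x y.
Proof. by move: (normr_vdot_le x y); rewrite ler_norml => /andP[]. Qed.

Lemma vdotDr x y y' : vdot x (fun i => y i + y' i) = vdot x y + vdot x y'.
Proof. by rewrite /vdot -big_split; apply: eq_bigr => i _; rewrite mulrDr. Qed.

Lemma vdotZr (c : R) x y : vdot x (fun i => c * y i) = c * vdot x y.
Proof. by rewrite /vdot mulr_sumr; apply: eq_bigr => i _; rewrite mulrCA. Qed.

Lemma vdotZl (c : R) x y : vdot (fun i => c * x i) y = c * vdot x y.
Proof. by rewrite /vdot mulr_sumr; apply: eq_bigr => i _; rewrite mulrA. Qed.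

Lemma vnormZ (c : R) x : vnorm (fun j => c * x j) = `|c| * vnorm x.
Proof. by rewrite /vnorm vdotZl vdotZr mulrA -expr2 sqrtrM ?sqr_ge0 // sqrtr_sqr. Qed.

Lemma vdot_vneg_vpos x : vdot (vneg x) (vpos x) = 0.
Proof. by rewrite /vdot big1 // => i _; exact: maxr0_Nmul. Qed.

Lemma vdot_sub_expand (a y m y' : 'I_n -> R) :
  (forall i, a i = y i - m i) ->
  vdot (fun i => a i - y' i) (fun i => a i - y' i)
  = vdot (fun i => a i - y i) (fun i => a i - y i) + 2 * vdot m y'
    - 2 * vdot m y + vdot (fun i => y i - y' i) (fun i => y i - y' i).
Proof.
move=> ha; rewrite /vdot !mulr_sumr -sumrN -!big_split /=.
by apply: eq_bigr => i _; rewrite ha; ring.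
Qed.

End Vectors.

Section Projection.
Variables (R : realType) (p q : nat).
Local Notation pvec := (('I_p -> R) * ('I_q -> R))%type.

Definition pdot (a b : pvec) : R := vdot a.1 b.1 + vdot a.2 b.2.

Lemma pdotC (a b : pvec) : pdot a b = pdot b a.
Proof. by rewrite /pdot vdotC [vdot a.2 _]vdotC. Qed.

Lemma is_proj_orth (C : pvec -> Prop) (a y m : pvec) :
  C y -> (forall i, a.1 i = y.1 i - m.1 i) -> (forall j, a.2 j = y.2 j - m.2 j) ->
  pdot m y = 0 -> (forall y', C y' -> 0 <= pdot m y') -> is_proj C a y.
Proof.
move=> Cy ha1 ha2 my_eq0 mC; split => // y' /mC my'_ge0.
rewrite /pdist /pnorm ler_wsqrtr //.
rewrite (vdot_sub_expand y'.1 ha1) (vdot_sub_expand y'.2 ha2).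
have := vdot_ge0 (fun i => y.1 i - y'.1 i).
have := vdot_ge0 (fun j => y.2 j - y'.2 j).
move: my_eq0 my'_ge0; rewrite /pdot; lra.
Qed.

Lemma coneLM_pdot_ge0 (c d : pvec) : coneL c -> coneM d -> 0 <= pdot d c.
Proof.
case: c d => [c1 c2] [d1 d2]; rewrite /coneL /coneM /pdot /= => c_ge [d_norm d_ge0].
have d1c1 : vnorm c2 * vdot d1 (ones R p) <= vdot d1 c1.
  rewrite /vdot mulr_sumr; apply: ler_sum => i _.
  have := c_ge i; have := d_ge0 i; rewrite /ones !mulr1 => d1_ge0 c1_ge.
  by rewrite mulrC ler_wpM2l.
have := ler_wpM2l (vnorm_ge0 c2) d_norm.
have := vdot_ge_Nnorm d2 c2.
lra.
Qed.

Lemma moreau_coneLM (z : 'I_p -> R) (w : 'I_q -> R) (y m : pvec) :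
  coneL y -> coneM m ->
  (forall i, z i = y.1 i - m.1 i) -> (forall j, w j = y.2 j - m.2 j) ->
  pdot m y = 0 ->
  is_proj (@coneL R p q) (z, w) y /\
  is_proj (@coneM R p q) (fun i => - z i, fun j => - w j) m.
Proof.
move=> Ly Mm hz hw my_eq0; split.
  by apply: is_proj_orth => // y' Ly'; exact: coneLM_pdot_ge0.
apply: (@is_proj_orth _ _ _ y) => /=.
- exact: Mm.
- by move=> i; rewrite hz opprB.
- by move=> j; rewrite hw opprB.
- by rewrite pdotC.
- by move=> y' My'; rewrite pdotC; exact: coneLM_pdot_ge0.
Qed.

End Projection.

Section Secular.
Variables (R : realType) (p : nat) (z : 'I_p -> R) (c : R).

Definition secular (t : R) : R :=
  \sum_(i < p) Num.max (t * c - z i) 0 - (1 - t) * c.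

Lemma secular_continuous : continuous secular.
Proof.
move=> t; apply: cvgB; last by apply: cvgMr_tmp; apply: cvgB; [exact: cvg_cst|exact: cvg_id].
apply: (@continuous_big R^o _ _ 0 xpredT add_continuous) => i _ s.
apply: (@continuous_max R R (fun s => s * c - z i) (fun=> 0)); last exact: cvg_cst.
by apply: cvgB; [apply: cvgMr_tmp; exact: cvg_id|exact: cvg_cst].
Qed.

Lemma lam_equation_secular (mu : R) : 0 < mu + 1 ->
  mu * c = vdot (ones R p) (vneg (fun i => (mu + 1) * z i - c * ones R p i))
  <-> secular (mu + 1)^-1 = 0.
Proof.
move=> mu1_gt0; set s := (mu + 1)^-1.
have -> : vdot (ones R p) (vneg (fun i => (mu + 1) * z i - c * ones R p i))
    = (mu + 1) * \sum_(i < p) Num.max (s * c - z i) 0.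
  rewrite /vdot mulr_sumr; apply: eq_bigr => i _.
  rewrite /vneg /ones mul1r mulr1 maxr_pMr ?ltW // mulr0 /s.
  by congr Num.max; field; lra.
rewrite /secular; set S := \sum_(i < p) _.
have s_mu1 : s * (mu + 1) = 1 by rewrite mulVf ?gt_eqF.
have -> : S - (1 - s) * c = s * ((mu + 1) * S - mu * c).
  have one_s : 1 - s = s * mu by rewrite -{1}s_mu1; ring.
  by rewrite mulrBr mulrA s_mu1 one_s; ring.
split => [->|/eqP]; first by rewrite subrr mulr0.
by rewrite /s mulf_eq0 invr_eq0 gt_eqF //= subr_eq0 => /eqP ->.
Qed.

Hypothesis c_gt0 : 0 < c.

Lemma secular_lt : {homo secular : s t / s < t}.
Proof.
move=> s t st; rewrite /secular.
have : \sum_(i < p) Num.max (s * c - z i) 0 <= \sum_(i < p) Num.max (t * c - z i) 0.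
  by apply: ler_sum => i _; rewrite le_max2 // lerD2r ler_wpM2r // ltW.
have : s * c < t * c by rewrite ltr_pM2r.
lra.
Qed.

Lemma secular_inj : injective secular.
Proof. exact/inc_inj/le_mono/secular_lt. Qed.

Lemma secular_root_exists :
  \sum_(i < p) Num.max (- z i) 0 < c -> (exists i, z i < c) ->
  exists2 t, 0 < t < 1 & secular t = 0.
Proof.
move=> neg_lt [i0 zi0_lt].
have sec0 : secular 0 < 0.
  rewrite /secular subr0 mul1r; under eq_bigr do rewrite mul0r sub0r.
  lra.
have sec1 : 0 < secular 1.
  rewrite /secular subrr mul0r subr0; under eq_bigr do rewrite mul1r.
  rewrite (bigD1 i0) //= ltr_pwDl ?lt_max ?subr_gt0 ?zi0_lt //.
  by apply: sumr_ge0 => i _; exact: maxr0_ge0.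
have [t] : exists2 t, t \in `[0, 1] & secular t = 0.
  apply: IVT; first exact: ler01.
    exact/continuous_subspaceT/secular_continuous.
  by rewrite ge_min le_max (ltW sec0) (ltW sec1) orbT.
rewrite in_itv /= => /andP[t_ge0 t_le1] sec_t.
exists t => //; rewrite !lt_neqAle t_ge0 t_le1 !andbT.
by apply/andP; split; apply/eqP => t_eq; subst t; lra.
Qed.

End Secular.

Section ProjectionFormulas.
Variables (R : realType) (p q : nat) (z : 'I_p -> R) (w : 'I_q -> R).

Lemma proj_coneLM_pos_dominant : vge (vpos z) (fun i => vnorm w * ones R p i) ->
  is_proj (@coneL R p q) (z, w) (vpos z, w) /\
  is_proj (@coneM R p q) (fun i => - z i, fun j => - w j) (vneg z, fun _ => 0).
Proof.
move=> z_pos; apply: moreau_coneLM => //=.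
- split => [|i]; last exact: maxr0_ge0.
  by rewrite vnorm0 vdot_onesr /=; apply: sumr_ge0 => i _; exact: maxr0_ge0.
- by move=> i; rewrite maxr0_subN.
- by move=> j; rewrite subr0.
- by rewrite /pdot vdot_vneg_vpos add0r /vdot big1 // => j _; rewrite mul0r.
Qed.

Lemma proj_coneLM_neg_dominant : vnorm w <= vdot (vneg z) (ones R p) ->
  is_proj (@coneL R p q) (z, w) (vpos z, fun _ => 0) /\
  is_proj (@coneM R p q) (fun i => - z i, fun j => - w j) (vneg z, fun j => - w j).
Proof.
move=> z_neg; apply: moreau_coneLM => //=.
- by move=> i /=; rewrite vnorm0 mul0r; exact: maxr0_ge0.
- by split => [|i] /=; [rewrite vnormN | exact: maxr0_ge0].
- by move=> i; rewrite maxr0_subN.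
- by move=> j; rewrite sub0r opprK.
- by rewrite /pdot vdot_vneg_vpos add0r /vdot big1 // => j _; rewrite mulr0.
Qed.

Lemma proj_coneLM_secular t : 0 <= t <= 1 -> secular z (vnorm w) t = 0 ->
  is_proj (@coneL R p q) (z, w)
    (fun i => vpos (fun k => z k - t * vnorm w * ones R p k) i + t * vnorm w * ones R p i,
     fun j => t * w j) /\
  is_proj (@coneM R p q) (fun i => - z i, fun j => - w j)
    (vneg (fun k => z k - t * vnorm w * ones R p k), fun j => - (1 - t) * w j).
Proof.
move=> /andP[t_ge0 t_le1] sec_t.
set x := fun k => z k - t * vnorm w * ones R p k.
have neg_sum : vdot (vneg x) (ones R p) = (1 - t) * vnorm w.
  move/eqP: sec_t; rewrite subr_eq0 vdot_onesr => /eqP <-.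
  by apply: eq_bigr => i _; rewrite /vneg /x /ones mulr1 opprB.
apply: moreau_coneLM => /=.
- move=> i; rewrite vnormZ ger0_norm // /ones !mulr1 lerDr; exact: maxr0_ge0.
- split => [|i]; last exact: maxr0_ge0.
  by rewrite vnormZ ler0_norm ?neg_sum ?opprK // oppr_le0 subr_ge0.
- by move=> i; rewrite addrAC maxr0_subN subrK.
- by move=> j; ring.
- rewrite /pdot /= vdotDr vdot_vneg_vpos add0r vdotZl !vdotZr neg_sum -vnorm_sqr.
  ring.
Qed.

End ProjectionFormulas.

Theorem theorem2 (R : realType) (p q : nat) (hp : (0 < p)%N) (hq : (0 < q)%N)
  (z : 'I_p -> R) (w : 'I_q -> R) :
  let e := ones R p in
  let nw := vnorm w in
  (* 1. *)
  (vge (vpos z) (fun i => nw * e i) ->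
     is_proj (@coneL R p q) (z, w) (vpos z, w) /\
     is_proj (@coneM R p q) (fun i => - z i, fun j => - w j)
       (vneg z, fun _ => 0)) /\
  (* 2. *)
  (nw <= vdot (vneg z) e ->
     is_proj (@coneL R p q) (z, w) (vpos z, fun _ => 0) /\
     is_proj (@coneM R p q) (fun i => - z i, fun j => - w j)
       (vneg z, fun j => - w j)) /\
  (* 3. *)
  (~ vge (vpos z) (fun i => nw * e i) -> vdot (vneg z) e < nw ->
     exists lam : R,
       (0 < lam /\
        lam * nw = vdot e (vneg (fun i => (lam + 1) * z i - nw * e i))) /\
       (forall mu : R, 0 < mu ->
          mu * nw = vdot e (vneg (fun i => (mu + 1) * z i - nw * e i)) ->
          mu = lam) /\
       is_proj (@coneL R p q) (z, w)
         (fun i => vpos (fun k => z k - (lam + 1)^-1 * nw * e k) i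
                   + (lam + 1)^-1 * nw * e i,
          fun j => (lam + 1)^-1 * w j) /\
       is_proj (@coneM R p q) (fun i => - z i, fun j => - w j)
         (vneg (fun k => z k - (lam + 1)^-1 * nw * e k),
          fun j => - (lam / (lam + 1)) * w j)).
Proof.
move=> e nw; split; [|split].
- exact: proj_coneLM_pos_dominant.
- exact: proj_coneLM_neg_dominant.
move=> z_not_pos neg_lt.
have neg_sum_ge0 : 0 <= vdot (vneg z) e.
  by rewrite vdot_onesr; apply: sumr_ge0 => i _; exact: maxr0_ge0.
have nw_gt0 : 0 < nw := le_lt_trans neg_sum_ge0 neg_lt.
have [i zi_lt] : exists i, z i < nw.
  have /existsNP[i /negP] := z_not_pos.
  by rewrite /e /ones mulr1 /vpos le_max negb_or -!ltNge => /andP[]; exists i.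
have [t /andP[t_gt0 t_lt1] sec_t] : exists2 t, 0 < t < 1 & secular z nw t = 0.
  by apply: secular_root_exists => //; [rewrite -vdot_onesr | exists i].
set lam := t^-1 - 1.
have lam1 : (lam + 1)^-1 = t by rewrite subrK invrK.
have lam_gt0 : 0 < lam by rewrite subr_gt0 invf_gt1.
exists lam; split; [|split].
- by split=> //; apply/lam_equation_secular; rewrite ?lam1 // ltr_wpDl // ltW.
- move=> mu mu_gt0 /lam_equation_secular mu_eq.
  have mu1 : (mu + 1)^-1 = t.
    by apply: (secular_inj (z := z) nw_gt0); rewrite sec_t mu_eq // ltr_wpDl // ltW.
  by apply: (addIr 1); apply: invr_inj; rewrite mu1 lam1.
have -> : lam / (lam + 1) = 1 - t by rewrite -[lam + 1]invrK lam1 /lam; field; lra.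
by rewrite lam1; apply: proj_coneLM_secular; rewrite ?ltW.
Qed.
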